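(* Let $m>0$, $\sigma>0$, and let $\theta$ be the distribution of $|X|$ where $X$ follows the normal law $\mathcal{N}(m,\sigma^2)$, with density $f_\theta(t)=\frac{1}{\sigma\sqrt{2\pi}}\left[\exp\left(-\frac12\left(\frac{t-m}{\sigma}\right)^2\right)+\exp\left(-\frac12\left(\frac{t+m}{\sigma}\right)^2\right)\right]$ for $t\ge0$. Then there exists $t^*\in[0,m)$ such that $f'_\theta(t)>0$ for all $t\in(0,t^* )$ and $f'_\theta(t)<0$ for all $t\in(t^*,\infty)$. Moreover, such $t^*$ satisfies $(t^* )^2\geq m^2-\sigma^2$. *)

From Stdlib Require Import Reals.
From Coquelicot Require Import Coquelicot.
Open Scope R_scope.

Definition f_theta (m sigma : R) (t : R) : R :=
  / (sigma * sqrt (2 * PI)) *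
  (exp (- / 2 * ((t - m) / sigma) ^ 2) + exp (- / 2 * ((t + m) / sigma) ^ 2)).

From Stdlib Require Import Reals Lra.
From Coquelicot Require Import Coquelicot.
Open Scope R_scope.

(* Factoring out the positive term [exp (-(t+m)^2 / (2 s^2))], the sign of
   [f_theta'] is that of [slope_factor t = (m - t) e^(2mt/s^2) - (m + t)]. This
   is negative for [t >= m]; on [0, m) it has the sign of [log_slope_ratio t =
   ln (m - t) - ln (m + t) + 2mt/s^2], whose derivative has the sign of
   [m^2 - s^2 - t^2]. So [log_slope_ratio] vanishes at 0, increases up to
   [sqrt (m^2 - s^2)] (if [s < m]) and decreases afterwards, and the intermediate
   value theorem gives its root [t*] in [[sqrt (max 0 (m^2 - s^2)), m)]. *)

Section AbsNormalDensity.

Variables m s : R.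
Hypothesis hm : 0 < m.
Hypothesis hs : 0 < s.

Definition slope_factor (t : R) : R := (m - t) * exp (2 * m * t / s ^ 2) - (m + t).

Definition log_slope_ratio (t : R) : R := ln (m - t) - ln (m + t) + 2 * m * t / s ^ 2.

Definition log_slope_ratio' (t : R) : R :=
  2 * m * (m ^ 2 - t ^ 2 - s ^ 2) / (s ^ 2 * (m ^ 2 - t ^ 2)).

Lemma Derive_f_theta (t : R) :
  exists c, 0 < c /\ Derive (f_theta m s) t = c * slope_factor t.
Proof.
  assert (Hpi : 0 < sqrt (2 * PI)) by (apply sqrt_lt_R0; pose proof PI_RGT_0; lra).
  exists (/ (s * sqrt (2 * PI)) / s ^ 2 * exp (- / 2 * ((t + m) / s) ^ 2)).
  split.
  - apply Rmult_lt_0_compat; [| apply exp_pos].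
    apply Rdiv_lt_0_compat; [| apply pow_lt; lra].
    apply Rinv_0_lt_compat, Rmult_lt_0_compat; lra.
  - apply is_derive_unique. unfold f_theta, slope_factor.
    auto_derive; [auto |].
    set (gauss u := exp (- / 2 * ((t + u) * / s * ((t + u) * / s * 1)))).
    assert (Hshift : gauss (- m) = gauss m * exp (2 * m * t / s ^ 2)).
    { unfold gauss. rewrite <- exp_plus. f_equal. field. lra. }
    replace (exp (- / 2 * ((t + m) / s) ^ 2)) with (gauss m)
      by (unfold gauss; f_equal; field; lra).
    fold (gauss (- m)) (gauss m). rewrite Hshift.
    field. lra.
Qed.

Lemma slope_factor_continuous : continuity slope_factor.
Proof.
  intro x. apply derivable_continuous_pt.
  exists (Derive slope_factor x). apply is_derive_Reals, Derive_correct.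
  unfold slope_factor. auto_derive. auto.
Qed.

Lemma slope_factor_neg_ge (t : R) : m <= t -> slope_factor t < 0.
Proof.
  intro Ht. unfold slope_factor. pose proof (exp_pos (2 * m * t / s ^ 2)). nra.
Qed.

Lemma slope_factor_exp_log (t : R) : -m < t < m ->
  slope_factor t = (m + t) * (exp (log_slope_ratio t) - 1).
Proof.
  intro Ht. unfold slope_factor, log_slope_ratio.
  replace (ln (m - t) - ln (m + t) + 2 * m * t / s ^ 2)
    with (ln (m - t) + (- ln (m + t) + 2 * m * t / s ^ 2)) by ring.
  rewrite !exp_plus, exp_Ropp, !exp_ln by lra.
  field. lra.
Qed.

Lemma slope_factor_pos (t : R) : 0 <= t < m -> 0 < log_slope_ratio t -> 0 < slope_factor t.
Proof.
  intros Ht Hh. rewrite slope_factor_exp_log by lra.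
  pose proof (exp_increasing _ _ Hh) as He. rewrite exp_0 in He. nra.
Qed.

Lemma slope_factor_neg (t : R) : 0 <= t < m -> log_slope_ratio t < 0 -> slope_factor t < 0.
Proof.
  intros Ht Hh. rewrite slope_factor_exp_log by lra.
  pose proof (exp_increasing _ _ Hh) as He. rewrite exp_0 in He. nra.
Qed.

Lemma log_slope_ratio0 : log_slope_ratio 0 = 0.
Proof.
  unfold log_slope_ratio. replace (m - 0) with (m + 0) by ring. field. lra.
Qed.

Lemma log_slope_ratio_root (t : R) : 0 <= t < m -> slope_factor t = 0 -> log_slope_ratio t = 0.
Proof.
  intros Ht Hk. rewrite slope_factor_exp_log in Hk by lra.
  apply exp_inv. rewrite exp_0. nra.
Qed.

Lemma log_slope_ratio_derivative (t : R) : -m < t < m ->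
  derivable_pt_lim log_slope_ratio t (log_slope_ratio' t).
Proof.
  intro Ht. apply is_derive_Reals. unfold log_slope_ratio, log_slope_ratio'.
  auto_derive; [lra |]. field. nra.
Qed.

Lemma log_slope_ratio_increasing (x y : R) :
  0 <= x < y -> y ^ 2 <= m ^ 2 - s ^ 2 -> log_slope_ratio x < log_slope_ratio y.
Proof.
  intros Hxy Hy.
  destruct (MVT_cor2 log_slope_ratio log_slope_ratio' x y) as [c [Hmvt Hc]]; [lra | |].
  - intros c Hc. apply log_slope_ratio_derivative. nra.
  - assert (0 < log_slope_ratio' c)
      by (apply Rdiv_lt_0_compat; apply Rmult_lt_0_compat; nra).
    nra.
Qed.

Lemma log_slope_ratio_decreasing (x y : R) :
  0 <= x < y -> y < m -> m ^ 2 - s ^ 2 <= x ^ 2 -> log_slope_ratio y < log_slope_ratio x.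
Proof.
  intros Hxy Hy Hx.
  destruct (MVT_cor2 log_slope_ratio log_slope_ratio' x y) as [c [Hmvt Hc]]; [lra | |].
  - intros c Hc. apply log_slope_ratio_derivative. lra.
  - assert (Hinv : 0 < / (s ^ 2 * (m ^ 2 - c ^ 2)))
      by (apply Rinv_0_lt_compat, Rmult_lt_0_compat; nra).
    assert (log_slope_ratio' c < 0).
    { unfold log_slope_ratio', Rdiv.
      assert (x ^ 2 < c ^ 2) by nra.
      assert (2 * m * (m ^ 2 - c ^ 2 - s ^ 2) < 0) by nra. nra. }
    nra.
Qed.

Lemma log_slope_ratio_pos_before_root (z t : R) :
  z < m -> log_slope_ratio z = 0 -> 0 < t < z -> 0 < log_slope_ratio t.
Proof.
  intros Hz Hhz Ht.
  destruct (Rle_lt_dec (t ^ 2) (m ^ 2 - s ^ 2)).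
  - rewrite <- log_slope_ratio0. apply log_slope_ratio_increasing; lra.
  - rewrite <- Hhz. apply log_slope_ratio_decreasing; lra.
Qed.

Lemma log_slope_ratio_neg_after_root (z t : R) :
  0 <= z -> m ^ 2 - s ^ 2 <= z ^ 2 -> log_slope_ratio z = 0 -> z < t < m ->
  log_slope_ratio t < 0.
Proof.
  intros Hz Hzs Hhz Ht. rewrite <- Hhz. apply log_slope_ratio_decreasing; lra.
Qed.

Lemma slope_factor_root :
  exists z, 0 <= z < m /\ m ^ 2 - s ^ 2 <= z ^ 2 /\ slope_factor z = 0.
Proof.
  destruct (Rle_lt_dec m s) as [Hms | Hsm].
  - exists 0. split; [lra | split; [nra |]].
    unfold slope_factor. replace (2 * m * 0 / s ^ 2) with 0 by (field; lra).
    rewrite exp_0. ring.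
  - set (t0 := sqrt (m ^ 2 - s ^ 2)).
    assert (Ht0sq : t0 ^ 2 = m ^ 2 - s ^ 2) by (apply pow2_sqrt; nra).
    assert (Ht0 : 0 < t0) by (apply sqrt_lt_R0; nra).
    assert (Hk0 : 0 < slope_factor t0).
    { apply slope_factor_pos; [nra |].
      rewrite <- log_slope_ratio0. apply log_slope_ratio_increasing; lra. }
    pose proof (slope_factor_neg_ge m (Rle_refl m)) as Hkm.
    assert (Hcont : continuity (fun x => - slope_factor x))
      by apply continuity_opp, slope_factor_continuous.
    destruct (IVT _ t0 m Hcont) as [z [Hz Hkz]]; [nra | lra | lra |].
    assert (Hzm : z <> m) by (intros ->; lra).
    exists z. split; [lra | split; [nra | lra]].
Qed.

End AbsNormalDensity.

Theorem mainTheorem3 (m sigma : R) (hm : 0 < m) (hs : 0 < sigma) :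
  exists tstar : R,
    0 <= tstar < m /\
    (forall t : R, 0 < t < tstar -> Derive (f_theta m sigma) t > 0) /\
    (forall t : R, tstar < t -> Derive (f_theta m sigma) t < 0) /\
    tstar ^ 2 >= m ^ 2 - sigma ^ 2.
Proof.
  destruct (slope_factor_root m sigma hm hs) as [z [Hz [Hzs Hkz]]].
  assert (Hhz : log_slope_ratio m sigma z = 0) by (apply (log_slope_ratio_root m sigma hm); lra).
  exists z. split; [lra | split; [| split; [| lra]]]; intros t Ht;
    destruct (Derive_f_theta m sigma hs t) as [c [Hc ->]].
  - assert (0 < slope_factor m sigma t); [| nra].
    apply (slope_factor_pos m sigma hm); [lra |].
    apply (log_slope_ratio_pos_before_root m sigma hm hs z); lra.
  - assert (slope_factor m sigma t < 0); [| nra].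
    destruct (Rlt_le_dec t m).
    + apply (slope_factor_neg m sigma hm); [lra |].
      apply (log_slope_ratio_neg_after_root m sigma hs z); lra.
    + apply (slope_factor_neg_ge m sigma hm); lra.
Qed.
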